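(* Let $\ell>1$ and $4m_c^2\ge(3\ell-1)^2$. Then there is a constant $C$ such that $$\int_0^{\phi(t)-\phi(b)}|E(r,t;b)|\,dr\le C|\phi(b)|^{\frac{1}{1-\ell}}\Big(1+\ln\frac{\phi(b)}{\phi(t)}\Big)^{1-\operatorname{sgn}M}$$ for all $t\in[1,\infty)$ and $1\le b\le t$.
   Context: $\phi(t)=\frac{t^{1-\ell}}{1-\ell}$ (so $\phi<0$ and $\phi(t)-\phi(b)>0$ for $1\le b<t$). $M=\frac{\sqrt{4m_c^2-(1-3\ell)^2}}{2(\ell-1)}\ge0$, $a:=\frac12+iM$, and $\operatorname{sgn}M\in\{0,1\}$ is $1$ iff $M>0$. The kernel is $$E(r,t;b)=2^{2a}(1-\ell)^{\frac{\ell}{1-\ell}}\phi(b)^{\frac{\ell}{1-\ell}+2a}\big((\phi(t)+\phi(b))^2-r^2\big)^{-a}F\Big(a,a;1;\frac{(\phi(t)-\phi(b))^2-r^2}{(\phi(t)+\phi(b))^2-r^2}\Big),$$ with $F$ Gauss's hypergeometric function and complex powers taken with the principal branch. *)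

From Stdlib Require Import Reals Arith Factorial.
From Coquelicot Require Import Coquelicot.
Open Scope R_scope.

Definition cexp (z : C) : C := (exp (Re z) * cos (Im z), exp (Re z) * sin (Im z)).

(* Principal-branch complex power x^w for a REAL base x (x <> 0):
   Log x = ln x for x > 0, Log x = ln (-x) + i*pi for x < 0. Value 0 at x = 0. *)
Definition cpow_real (x : R) (w : C) : C :=
  match Rlt_dec 0 x with
  | left _ => cexp (Cmult w (RtoC (ln x)))
  | right _ =>
      match Rlt_dec x 0 with
      | left _ => cexp (Cmult w (ln (- x), PI))
      | right _ => RtoC 0
      end
  end.

Fixpoint poch (a : C) (n : nat) : C :=
  match n with
  | O => RtoC 1
  | S k => Cmult (poch a k) (Cplus a (RtoC (INR k)))
  end.

Definition hyp_term (a b c z : C) (n : nat) : C :=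
  Cmult (Cdiv (Cmult (poch a n) (poch b n)) (Cmult (poch c n) (RtoC (INR (Factorial.fact n)))))
        (Cpow z n).

(* Gauss's hypergeometric function, as the sum of its series (|z| < 1). *)
Definition hyp2F1 (a b c z : C) : C :=
  (Series (fun n => Re (hyp_term a b c z n)), Series (fun n => Im (hyp_term a b c z n))).

Definition phi (l t : R) : R := Rpower t (1 - l) / (1 - l).

Definition Mpar (l mc : R) : R := sqrt (4 * mc ^ 2 - (1 - 3 * l) ^ 2) / (2 * (l - 1)).

Definition apar (l mc : R) : C := (1 / 2, Mpar l mc).

Definition sgnM (l mc : R) : nat := if Rlt_dec 0 (Mpar l mc) then 1%nat else 0%nat.

Definition Ekernel (l mc r t b : R) : C :=
  let a := apar l mc in
  let pt := phi l t in
  let pb := phi l b in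
  Cmult (Cmult (Cmult (Cmult
    (cpow_real 2 (Cmult (RtoC 2) a))
    (cpow_real (1 - l) (RtoC (l / (1 - l)))))
    (cpow_real pb (Cplus (RtoC (l / (1 - l))) (Cmult (RtoC 2) a))))
    (cpow_real ((pt + pb) ^ 2 - r ^ 2) (Copp a)))
    (hyp2F1 a a (RtoC 1)
       (RtoC (((pt - pb) ^ 2 - r ^ 2) / ((pt + pb) ^ 2 - r ^ 2)))).

From Stdlib Require Import Reals Lra Psatz ZArith Classical.
From Coquelicot Require Import Coquelicot.
Open Scope R_scope.

(* Put S = -(phi t + phi b) and A = phi t - phi b, so that 0 <= A < S.  The factor
   phi(b)^(l/(1-l) + 2a) has modulus at most |phi b|^(1/(1-l)), since arg phi(b) = pi and
   the imaginary part 2M of the exponent is nonnegative; and |(S^2 - r^2)^(-a)| =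
   (S^2 - r^2)^(-1/2) <= (S (S - r))^(-1/2), whose integral over [0, A] is at most 2.
   The argument z of F lies in [0, 1) with 1/(1 - z) <= phi b / phi t.
   For a = 1/2 + iM the coefficients c_n = ((a)_n / n!)^2 of F(a, a; 1; z) satisfy
   |c_n| <= e^(1 + 4M^2) / (n + 1), whence F = O(1 + ln (1/(1 - z))).  When M > 0 the
   logarithm disappears: Abel summation against
   c_(n+1) (n + 1 + beta) - c_n (n + beta) = c_n (2a - 1 + O(1/n^2)), with 2a - 1 = 2iM <> 0,
   shows that F is bounded on [0, 1). *)

(** * Elementary bounds on power series *)

Lemma exp_le x y : x <= y -> exp x <= exp y.
Proof. intros [H | ->]; [now apply Rlt_le, exp_increasing | apply Rle_refl]. Qed.

Lemma pow_le_1 x n : 0 <= x <= 1 -> x ^ n <= 1.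
Proof. intros Hx. rewrite <- (pow1 n). now apply pow_incr. Qed.

Lemma ln_ge_0 y : 1 <= y -> 0 <= ln y.
Proof. intros Hy. rewrite <- ln_1. apply ln_le; lra. Qed.

Lemma inv_1_minus_ge_1 x : 0 <= x < 1 -> 1 <= / (1 - x).
Proof. intros Hx. rewrite <- Rinv_1. apply Rinv_le_contravar; lra. Qed.

Lemma ln_ge_1_minus_inv y : 0 < y -> 1 - / y <= ln y.
Proof.
  intros Hy. pose proof (exp_ineq1_le (- ln y)) as H.
  rewrite exp_Ropp, exp_ln in H; lra.
Qed.

Lemma sum_harmonic_le n : sum_f_R0 (fun k => / (INR k + 1)) n <= 1 + ln (INR n + 1).
Proof.
  induction n as [|n IH].
  - simpl. rewrite Rplus_0_l, ln_1. lra.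
  - rewrite tech5, S_INR. pose proof (pos_INR n).
    assert (Hstep : / (INR n + 1 + 1) <= ln (INR n + 1 + 1) - ln (INR n + 1)).
    { rewrite <- ln_div by lra.
      replace (/ (INR n + 1 + 1)) with (1 - / ((INR n + 1 + 1) / (INR n + 1))) by (field; lra).
      apply ln_ge_1_minus_inv, Rdiv_lt_0_compat; lra. }
    lra.
Qed.

Lemma exists_nat_floor y : 1 <= y -> exists N : nat, (0 < N)%nat /\ INR N <= y < INR N + 1.
Proof.
  intros Hy. destruct (base_Int_part y) as [H1 H2].
  assert (Hk : (1 <= Int_part y)%Z).
  { assert (h : (0 < Int_part y)%Z) by (apply lt_0_IZR; lra). lia. }
  exists (Z.to_nat (Int_part y)). split; [lia|].
  rewrite INR_IZR_INZ, Z2Nat.id by lia. lra.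
Qed.

Lemma ex_series_dominated (a b : nat -> R) :
  (forall n, Rabs (a n) <= b n) -> ex_series b -> ex_series a.
Proof. apply (@ex_series_le R_AbsRing R_CompleteNormedModule). Qed.

Lemma ex_series_Rmult_l c (a : nat -> R) : ex_series a -> ex_series (fun n => c * a n).
Proof. apply (@ex_series_scal_l R_AbsRing R_NormedModule). Qed.

Lemma ex_series_pow x : 0 <= x < 1 -> ex_series (fun n => x ^ n).
Proof. intros Hx. apply ex_series_geom. rewrite Rabs_right; lra. Qed.

Lemma pow_div_succ_bounds x n : 0 <= x <= 1 ->
  0 <= x ^ n / (INR n + 1) <= x ^ n /\ x ^ n / (INR n + 1) <= / (INR n + 1).
Proof.
  intros Hx. pose proof (pos_INR n). pose proof (pow_le x n ltac:(lra)).
  pose proof (pow_le_1 x n Hx).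
  assert (0 < / (INR n + 1) <= 1).
  { split; [apply Rinv_0_lt_compat; lra|]. rewrite <- Rinv_1. apply Rinv_le_contravar; lra. }
  unfold Rdiv. split; [split|]; [apply Rmult_le_pos | | ]; nra.
Qed.

Lemma ex_series_pow_div_succ x : 0 <= x < 1 -> ex_series (fun n => x ^ n / (INR n + 1)).
Proof.
  intros Hx. apply (ex_series_dominated _ (fun n => x ^ n)); [|now apply ex_series_pow].
  intros n. destruct (pow_div_succ_bounds x n ltac:(lra)) as [Hn _]. rewrite Rabs_right; lra.
Qed.

Lemma sum_pow_div_succ_le x N : 0 <= x <= 1 ->
  sum_f_R0 (fun n => x ^ n / (INR n + 1)) N <= 1 + ln (INR N + 1).
Proof.
  intros Hx. eapply Rle_trans; [|apply sum_harmonic_le].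
  apply sum_Rle. intros n _. apply (pow_div_succ_bounds x n Hx).
Qed.

Lemma Series_pow_div_succ_tail_le x N : 0 <= x < 1 ->
  Series (fun k => x ^ (N + k) / (INR (N + k) + 1)) <= / ((INR N + 1) * (1 - x)).
Proof.
  intros Hx. pose proof (pos_INR N).
  apply Rle_trans with (Series (fun k => / (INR N + 1) * x ^ k)).
  - apply Series_le; [|now apply ex_series_Rmult_l, ex_series_pow].
    intros k. pose proof (pos_INR k). pose proof (pow_le x k ltac:(lra)).
    pose proof (pow_le_1 x N ltac:(lra)).
    assert (/ (INR N + INR k + 1) <= / (INR N + 1)) by (apply Rinv_le_contravar; lra).
    assert (0 < / (INR N + INR k + 1)) by (apply Rinv_0_lt_compat; lra).
    rewrite plus_INR, pow_add. unfold Rdiv. split.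
    + apply Rmult_le_pos; [apply Rmult_le_pos; [apply pow_le|]|]; lra.
    + apply Rle_trans with (x ^ k * / (INR N + INR k + 1)); [|nra].
      apply Rmult_le_compat_r; [lra|]. nra.
  - rewrite Series_scal_l, Series_geom by (rewrite Rabs_right; lra).
    right. field. lra.
Qed.

Lemma Series_pow_div_succ_le x : 0 <= x < 1 ->
  Series (fun n => x ^ n / (INR n + 1)) <= 2 + ln (/ (1 - x)).
Proof.
  intros Hx.
  set (y := / (1 - x)).
  assert (Hy : 1 <= y) by exact (inv_1_minus_ge_1 x Hx).
  (* Cut at N = floor (1 / (1 - x)): the head is a harmonic sum, the tail a geometric series. *)
  destruct (exists_nat_floor y Hy) as [N [HN [HN1 HN2]]].
  rewrite (Series_incr_n _ N HN (ex_series_pow_div_succ x Hx)).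
  pose proof (sum_pow_div_succ_le x (pred N) ltac:(lra)) as Hhead.
  replace (INR (pred N) + 1) with (INR N) in Hhead
    by (destruct N; [lia|]; rewrite S_INR; simpl; lra).
  pose proof (ln_le (INR N) y ltac:(apply lt_0_INR; lia) HN1).
  pose proof (Series_pow_div_succ_tail_le x N Hx) as Htail.
  assert (Hprod : 1 <= (INR N + 1) * (1 - x)).
  { replace 1 with (y * (1 - x)) at 1 by (unfold y; field; lra).
    apply Rmult_le_compat_r; lra. }
  assert (/ ((INR N + 1) * (1 - x)) <= 1) by (rewrite <- Rinv_1; apply Rinv_le_contravar; lra).
  lra.
Qed.

Lemma ex_series_Rabs_bounded_pow (q : nat -> R) P x : 0 <= x < 1 ->
  (forall n, Rabs (q n) <= P) -> ex_series (fun n => Rabs (q n * x ^ n)).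
Proof.
  intros Hx Hq. apply (ex_series_dominated _ (fun n => P * x ^ n)).
  - intros n.
    rewrite Rabs_Rabsolu, Rabs_mult, (Rabs_right (x ^ n)) by (apply Rle_ge, pow_le; lra).
    apply Rmult_le_compat_r; [apply pow_le; lra | apply Hq].
  - now apply ex_series_Rmult_l, ex_series_pow.
Qed.

Lemma Rabs_Series_bounded_pow_le (q : nat -> R) P x : 0 <= x < 1 ->
  (forall n, Rabs (q n) <= P) -> Rabs (Series (fun n => q n * x ^ n)) <= P / (1 - x).
Proof.
  intros Hx Hq.
  eapply Rle_trans; [apply Series_Rabs, (ex_series_Rabs_bounded_pow q P x Hx Hq)|].
  unfold Rdiv. rewrite <- (Series_geom x), <- Series_scal_l by (rewrite Rabs_right; lra).
  apply Series_le; [|now apply ex_series_Rmult_l, ex_series_pow].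
  intros n. split; [apply Rabs_pos|].
  rewrite Rabs_mult, (Rabs_right (x ^ n)) by (apply Rle_ge, pow_le; lra).
  apply Rmult_le_compat_r; [apply pow_le; lra | apply Hq].
Qed.

Lemma Series_diff_pow_le (q : nat -> R) P x : 0 <= x < 1 -> (forall n, Rabs (q n) <= P) ->
  ex_series (fun n => (q (S n) - q n) * x ^ n) /\
  Series (fun n => (q (S n) - q n) * x ^ n) <= 2 * P.
Proof.
  intros Hx Hq.
  assert (Hq' : forall n, Rabs (q (S n)) <= P) by (intros; apply Hq).
  pose proof (ex_series_Rabs _ (ex_series_Rabs_bounded_pow _ _ _ Hx Hq)) as H0.
  pose proof (ex_series_Rabs _ (ex_series_Rabs_bounded_pow _ _ _ Hx Hq')) as H1.
  assert (Hsplit : forall n, (q (S n) - q n) * x ^ n = q (S n) * x ^ n - q n * x ^ n)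
    by (intros; ring).
  split.
  - apply (ex_series_ext _ _ (fun n => eq_sym (Hsplit n))).
    now apply (@ex_series_minus R_AbsRing R_NormedModule).
  - (* Abel summation: the series equals (1 - x) * sum q (n+1) x^n - q 0. *)
    rewrite (Series_ext _ _ Hsplit), Series_minus, (Series_incr_1 (fun n => q n * x ^ n)) by easy.
    rewrite (Series_ext (fun k => q (S k) * x ^ S k) (fun k => x * (q (S k) * x ^ k)))
      by (intros; simpl; ring).
    rewrite Series_scal_l. simpl pow. rewrite Rmult_1_r.
    pose proof (Rabs_Series_bounded_pow_le _ _ _ Hx Hq') as Htail.
    set (T := Series (fun n => q (S n) * x ^ n)) in *.
    assert (Hhead := Hq O). apply Rabs_le_between in Hhead.
    assert ((1 - x) * T <= P).
    { apply Rle_trans with ((1 - x) * (P / (1 - x))); [|right; field; lra].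
      apply Rmult_le_compat_l; [lra|]. eapply Rle_trans; [apply Rle_abs | exact Htail]. }
    lra.
Qed.

Lemma Series_inv_sq_pow (v : nat -> R) P x : 0 <= x < 1 ->
  (forall n, Rabs (v n) <= P / (INR n + 1) ^ 2) ->
  ex_series (fun n => Rabs (v n * x ^ n)) /\ Rabs (Series (fun n => v n * x ^ n)) <= 4 * P.
Proof.
  intros Hx Hv.
  (* 1 / (n+1)^2 <= 2 (q (n+1) - q n) for q n = - 1 / (n+1). *)
  set (q := fun n => - / (INR n + 1)).
  assert (Hq : forall n, Rabs (q n) <= 1).
  { intros n. pose proof (pos_INR n). unfold q. rewrite Rabs_Ropp, Rabs_right.
    - rewrite <- Rinv_1. apply Rinv_le_contravar; lra.
    - apply Rle_ge, Rlt_le, Rinv_0_lt_compat; lra. }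
  destruct (Series_diff_pow_le q 1 x Hx Hq) as [Hqex Hqle].
  assert (HP : 0 <= P).
  { specialize (Hv O). simpl in Hv. pose proof (Rabs_pos (v O)). lra. }
  assert (Hdom : forall n, Rabs (v n * x ^ n) <= 2 * P * ((q (S n) - q n) * x ^ n)).
  { intros n. pose proof (pos_INR n). pose proof (pow_le x n ltac:(lra)).
    unfold q. rewrite S_INR.
    replace (- / (INR n + 1 + 1) - - / (INR n + 1)) with (/ ((INR n + 1) * (INR n + 2)))
      by (field; lra).
    rewrite Rabs_mult, (Rabs_right (x ^ n)), <- Rmult_assoc by lra.
    apply Rmult_le_compat_r; [lra|].
    assert (Hsq : / (INR n + 1) ^ 2 <= 2 * / ((INR n + 1) * (INR n + 2))).
    { replace (2 * / ((INR n + 1) * (INR n + 2))) with (/ ((INR n + 1) * (INR n + 2) / 2))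
        by (field; lra).
      apply Rinv_le_contravar; [apply Rdiv_lt_0_compat; nra | simpl; nra]. }
    eapply Rle_trans; [apply Hv|]. unfold Rdiv.
    replace (2 * P * / ((INR n + 1) * (INR n + 2))) with (P * (2 * / ((INR n + 1) * (INR n + 2))))
      by ring.
    apply Rmult_le_compat_l; lra. }
  assert (Hex : ex_series (fun n => Rabs (v n * x ^ n))).
  { apply (ex_series_dominated _ _ (fun n => ltac:(rewrite Rabs_Rabsolu; apply Hdom))).
    now apply ex_series_Rmult_l. }
  split; [exact Hex|].
  eapply Rle_trans; [apply Series_Rabs, Hex|].
  eapply Rle_trans.
  - apply Series_le; [|apply ex_series_Rmult_l, Hqex].
    intros n. split; [apply Rabs_pos | apply Hdom].
  - rewrite Series_scal_l. nra.
Qed.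

Lemma Rabs_Im_le_Cmod (c : C) : Rabs (Im c) <= Cmod c.
Proof.
  destruct c as [u v]; unfold Cmod, Im; simpl.
  rewrite <- sqrt_Rsqr_abs. apply sqrt_le_1_alt. unfold Rsqr. nra.
Qed.

(* The modulus of a sum is the supremum of its real projections [Re (w * _)] over unit [w]. *)
Lemma Cmod_Series_le (u : nat -> C) K : 0 <= K ->
  ex_series (fun n => Cmod (u n)) ->
  (forall w : C, Cmod w = 1 -> Series (fun n => Re (w * u n)%C) <= K) ->
  Cmod (Series (fun n => Re (u n)), Series (fun n => Im (u n))) <= K.
Proof.
  intros HK Hs Hw.
  assert (Hre : ex_series (fun n => Re (u n))).
  { apply (ex_series_dominated _ _ (fun n => re_le_Cmod (u n)) Hs). }
  assert (Him : ex_series (fun n => Im (u n))).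
  { apply (ex_series_dominated _ _ (fun n => Rabs_Im_le_Cmod (u n)) Hs). }
  set (sr := Series (fun n => Re (u n))). set (si := Series (fun n => Im (u n))).
  set (c := Cmod (sr, si)).
  assert (Hc2 : c ^ 2 = sr ^ 2 + si ^ 2) by apply Cmod2_alt.
  destruct (Req_dec c 0) as [Hc0 | Hc0]; [lra|].
  assert (Hc : 0 < c) by (pose proof (Cmod_ge_0 (sr, si)) as H; fold c in H; lra).
  assert (Hunit : Cmod (sr / c, - si / c) = 1).
  { assert (Hsq : Cmod (sr / c, - si / c) ^ 2 = 1).
    { rewrite Cmod2_alt. simpl. field_simplify; [|lra].
      replace (sr ^ 2 + si ^ 2) with (c ^ 2) by lra. field. lra. }
    pose proof (Cmod_ge_0 (sr / c, - si / c)). nra. }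
  specialize (Hw _ Hunit).
  replace (Series (fun n => Re (Cmult (sr / c, - si / c) (u n)))) with c in Hw; [exact Hw|].
  rewrite (Series_ext _ (fun n => Re (u n) * (sr / c) + Im (u n) * (si / c))).
  - rewrite Series_plus by now apply ex_series_scal_r.
    rewrite !Series_scal_r. fold sr si.
    apply Rmult_eq_reg_l with c; [|lra].
    field_simplify; [lra | lra].
  - intros n. destruct (u n) as [p q]. unfold Cmult, Re, Im; simpl. unfold Rdiv. ring.
Qed.

Lemma Cmod_cexp z : Cmod (cexp z) = exp (Re z).
Proof.
  unfold cexp, Cmod. simpl fst. simpl snd.
  replace ((exp (Re z) * cos (Im z)) ^ 2 + (exp (Re z) * sin (Im z)) ^ 2)
    with (exp (Re z) ^ 2 * (Rsqr (sin (Im z)) + Rsqr (cos (Im z)))) by (unfold Rsqr; ring).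
  rewrite sin2_cos2, Rmult_1_r. apply sqrt_pow2, Rlt_le, exp_pos.
Qed.

Lemma Cmod_cpow_real_pos x w : 0 < x -> Cmod (cpow_real x w) = Rpower x (Re w).
Proof.
  intros Hx. unfold cpow_real. destruct (Rlt_dec 0 x); [|lra].
  rewrite Cmod_cexp. unfold Rpower. f_equal. destruct w. unfold Cmult, RtoC, Re; simpl. ring.
Qed.

(* For a negative base the principal branch contributes the factor exp (- pi Im w) <= 1. *)
Lemma Cmod_cpow_real_neg_le x w : x < 0 -> 0 <= Im w ->
  Cmod (cpow_real x w) <= Rpower (- x) (Re w).
Proof.
  intros Hx Hw. unfold cpow_real. destruct (Rlt_dec 0 x); [lra|]. destruct (Rlt_dec x 0); [|lra].
  rewrite Cmod_cexp. unfold Rpower. apply exp_le.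
  destruct w as [u v]. unfold Cmult, Re, Im in *; simpl in *.
  pose proof PI_RGT_0. nra.
Qed.

(** * The hypergeometric function F(1/2 + iM, 1/2 + iM; 1; x) *)

Definition diag_coef (a : C) (n : nat) : C := ((poch a n / RtoC (INR (fact n))) ^ 2)%C.

Lemma poch_1 n : poch (RtoC 1) n = RtoC (INR (fact n)).
Proof.
  induction n as [|n IH]; [reflexivity|].
  simpl poch. rewrite IH. change (fact (S n)) with (S n * fact n)%nat.
  rewrite mult_INR, S_INR, RtoC_mult, !RtoC_plus. ring.
Qed.

Lemma hyp_term_diag a x n :
  hyp_term a a (RtoC 1) (RtoC x) n = (diag_coef a n * RtoC (x ^ n))%C.
Proof.
  unfold hyp_term, diag_coef. rewrite poch_1, RtoC_pow.
  assert (Hf : RtoC (INR (fact n)) <> 0%C)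
    by (intros H; apply (INR_fact_neq_0 n); now injection H).
  field. exact Hf.
Qed.

Lemma diag_coef_0 a : diag_coef a 0 = 1%C.
Proof. unfold diag_coef. simpl. field. Qed.

Lemma diag_coef_succ a n :
  diag_coef a (S n) = (diag_coef a n * ((a + RtoC (INR n)) / RtoC (INR n + 1)) ^ 2)%C.
Proof.
  unfold diag_coef. simpl poch. change (fact (S n)) with (S n * fact n)%nat.
  rewrite mult_INR, S_INR, RtoC_mult.
  assert (Hf : RtoC (INR (fact n)) <> 0%C)
    by (intros H; apply (INR_fact_neq_0 n); now injection H).
  assert (Hn : RtoC (INR n + 1) <> 0%C)
    by (intros H; injection H; pose proof (pos_INR n); lra).
  field. auto.
Qed.

Lemma Cmod_diag_coef_succ M n :
  Cmod (diag_coef (1/2, M) (S n)) =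
  Cmod (diag_coef (1/2, M) n) * (((INR n + 1/2) ^ 2 + M ^ 2) / (INR n + 1) ^ 2).
Proof.
  pose proof (pos_INR n).
  rewrite diag_coef_succ, Cmod_mult, Cmod_pow, Cmod_div, Cmod_R, Rabs_right by
    (try (let E := fresh in intros E; injection E); lra).
  f_equal. unfold Rdiv. rewrite Rpow_mult_distr, Cmod2_alt, pow_inv. simpl. field. lra.
Qed.

(* Invariant of the induction: the factor exp (m / (n+1)) absorbs the excess of the
   ratio |c_(n+1)| (n+2) / (|c_n| (n+1)) = 1 + O(1 / n^2) over 1. *)
Lemma Cmod_diag_coef_invariant M n :
  Cmod (diag_coef (1/2, M) n) * (INR n + 1) * exp ((1 + 4 * M ^ 2) / (INR n + 1))
  <= exp (1 + 4 * M ^ 2).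
Proof.
  set (m := 1 + 4 * M ^ 2).
  induction n as [|n IH].
  - rewrite diag_coef_0, Cmod_1. simpl. replace (m / (0 + 1)) with m by field. lra.
  - rewrite Cmod_diag_coef_succ, S_INR.
    set (x := INR n + 1) in *. set (q := Cmod (diag_coef (1/2, M) n)) in *.
    assert (Hx : 1 <= x) by (unfold x; pose proof (pos_INR n); lra).
    assert (Hq : 0 <= q) by apply Cmod_ge_0.
    assert (Hm : 1 <= m) by (unfold m; nra).
    replace (INR n + 1/2) with (x - 1/2) by (unfold x; lra).
    assert (Hsplit : exp (m / x) = exp (m / (x + 1)) * exp (m / (x * (x + 1)))).
    { rewrite <- exp_plus. f_equal. field. lra. }
    assert (Hratio : ((x - 1/2) ^ 2 + M ^ 2) / x ^ 2 * (x + 1) <= x * exp (m / (x * (x + 1)))).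
    { apply Rle_trans with (x * (1 + m / (x * (x + 1)))).
      2: { pose proof (exp_ineq1_le (m / (x * (x + 1)))). apply Rmult_le_compat_l; lra. }
      apply Rmult_le_reg_r with (x ^ 2 * (x + 1)); [nra|].
      field_simplify; try lra. unfold m.
      assert (0 <= M ^ 2 * (x ^ 2 - x)) by (apply Rmult_le_pos; nra).
      assert (0 <= M ^ 2 * (x ^ 2 - 1)) by (apply Rmult_le_pos; nra).
      nra. }
    rewrite Hsplit in IH.
    pose proof (exp_pos (m / (x + 1))).
    eapply Rle_trans; [|exact IH].
    replace (q * (((x - 1/2) ^ 2 + M ^ 2) / x ^ 2) * (x + 1) * exp (m / (x + 1)))
      with (q * exp (m / (x + 1)) * (((x - 1/2) ^ 2 + M ^ 2) / x ^ 2 * (x + 1))) by ring.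
    replace (q * x * (exp (m / (x + 1)) * exp (m / (x * (x + 1)))))
      with (q * exp (m / (x + 1)) * (x * exp (m / (x * (x + 1))))) by ring.
    apply Rmult_le_compat_l; [apply Rmult_le_pos; lra | exact Hratio].
Qed.

Lemma Cmod_diag_coef_le M n :
  Cmod (diag_coef (1/2, M) n) <= exp (1 + 4 * M ^ 2) / (INR n + 1).
Proof.
  pose proof (Cmod_diag_coef_invariant M n) as Hinv. pose proof (pos_INR n).
  pose proof (Cmod_ge_0 (diag_coef (1/2, M) n)).
  assert (H1 : 1 <= exp ((1 + 4 * M ^ 2) / (INR n + 1))).
  { pose proof (exp_ineq1_le ((1 + 4 * M ^ 2) / (INR n + 1))).
    assert (0 <= (1 + 4 * M ^ 2) / (INR n + 1)) by (apply Rdiv_le_0_compat; nra). lra. }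
  apply Rmult_le_reg_r with (INR n + 1); [lra|].
  unfold Rdiv. rewrite Rmult_assoc, Rinv_l, Rmult_1_r by lra.
  assert (0 <= Cmod (diag_coef (1/2, M) n) * (INR n + 1)) by (apply Rmult_le_pos; lra).
  nra.
Qed.

Lemma Re_minus (z1 z2 : C) : Re (z1 - z2)%C = Re z1 - Re z2.
Proof. destruct z1, z2. unfold Cminus, Cplus, Copp, Re; simpl. ring. Qed.

Section DiagonalHypergeometric.

Variable M : R.
Let a : C := (1/2, M).
Let E := exp (1 + 4 * M ^ 2).

Lemma Cmod_hyp_term_le x n : 0 <= x ->
  Cmod (hyp_term a a (RtoC 1) (RtoC x) n) <= E * (x ^ n / (INR n + 1)).
Proof.
  intros Hx. pose proof (pow_le x n Hx).
  rewrite hyp_term_diag, Cmod_mult, Cmod_R, Rabs_right by lra.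
  unfold Rdiv. rewrite (Rmult_comm (x ^ n)), <- Rmult_assoc.
  apply Rmult_le_compat_r; [lra | apply Cmod_diag_coef_le].
Qed.

Lemma ex_series_Cmod_hyp_term x : 0 <= x < 1 ->
  ex_series (fun n => Cmod (hyp_term a a (RtoC 1) (RtoC x) n)).
Proof.
  intros Hx. apply (ex_series_dominated _ (fun n => E * (x ^ n / (INR n + 1)))).
  - intros n. rewrite Rabs_right by apply Rle_ge, Cmod_ge_0. apply Cmod_hyp_term_le; lra.
  - now apply ex_series_Rmult_l, ex_series_pow_div_succ.
Qed.

Lemma Cmod_hyp2F1_log_le x : 0 <= x < 1 ->
  Cmod (hyp2F1 a a (RtoC 1) (RtoC x)) <= E * (2 + ln (/ (1 - x))).
Proof.
  intros Hx. pose proof (ex_series_pow_div_succ x Hx) as Hex.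
  pose proof (Series_pow_div_succ_le x Hx) as Hle.
  pose proof (ln_ge_0 _ (inv_1_minus_ge_1 x Hx)).
  pose proof (exp_pos (1 + 4 * M ^ 2)).
  apply Cmod_Series_le; [unfold E; nra | now apply ex_series_Cmod_hyp_term|].
  intros w Hw.
  assert (Hdom : forall n, Rabs (Re (w * hyp_term a a (RtoC 1) (RtoC x) n)%C)
                           <= E * (x ^ n / (INR n + 1))).
  { intros n. eapply Rle_trans; [apply re_le_Cmod|].
    rewrite Cmod_mult, Hw, Rmult_1_l. apply Cmod_hyp_term_le; lra. }
  assert (HEex : ex_series (fun n => E * (x ^ n / (INR n + 1)))) by now apply ex_series_Rmult_l.
  eapply Rle_trans; [apply Rle_abs|].
  eapply Rle_trans.
  { apply Series_Rabs, (ex_series_dominated _ _ (fun n => ltac:(rewrite Rabs_Rabsolu; apply Hdom))).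
    exact HEex. }
  eapply Rle_trans.
  { apply Series_le; [intros n; split; [apply Rabs_pos | apply Hdom] | exact HEex]. }
  rewrite Series_scal_l. apply Rmult_le_compat_l; [unfold E; lra | exact Hle].
Qed.

Section OscillatingCase.

Hypothesis HM : 0 < M.

(* [be] is chosen so that the 1/(n+1) term of c_(n+1) (n+1+be) - c_n (n+be) vanishes. *)
Let al : C := (2 * a - 1)%C.
Let be : C := ((1 - a) / 2)%C.
Let de : C := ((a - 1) ^ 2 * be)%C.

Lemma al_neq_0 : al <> 0%C.
Proof. intros H. apply (f_equal Im) in H. unfold al, a in H. simpl in H. lra. Qed.

Lemma diag_coef_by_parts n :
  (diag_coef a (S n) * (RtoC (INR n + 1) + be) - diag_coef a n * (RtoC (INR n) + be))%C =
  (diag_coef a n * (al + de / RtoC ((INR n + 1) ^ 2)))%C.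
Proof.
  rewrite diag_coef_succ, RtoC_pow, !RtoC_plus.
  assert (RtoC (INR n) + RtoC 1 <> 0)%C.
  { rewrite <- RtoC_plus. intros H. injection H. pose proof (pos_INR n). lra. }
  unfold de, be, al. field. assumption.
Qed.

Let abel_coef (w : C) (n : nat) : R := Re (w / al * (diag_coef a n * (RtoC (INR n) + be)))%C.
Let abel_error (w : C) (n : nat) : R := Re (w * de / al * diag_coef a n)%C / (INR n + 1) ^ 2.

Lemma Re_hyp_term_by_parts w x n :
  Re (w * hyp_term a a (RtoC 1) (RtoC x) n)%C
  = (abel_coef w (S n) - abel_coef w n) * x ^ n - abel_error w n * x ^ n.
Proof.
  pose proof (pos_INR n).
  assert (Hn : (INR n + 1) ^ 2 <> 0) by (apply pow_nonzero; lra).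
  assert (Hsplit : (w * diag_coef a n)%C =
    (w / al * (diag_coef a (S n) * (RtoC (INR n + 1) + be))
     - w / al * (diag_coef a n * (RtoC (INR n) + be))
     - w * de / al * diag_coef a n * RtoC (/ (INR n + 1) ^ 2))%C).
  { assert (Hpart : (diag_coef a (S n) * (RtoC (INR n + 1) + be))%C =
      (diag_coef a n * (RtoC (INR n) + be)
       + diag_coef a n * (al + de / RtoC ((INR n + 1) ^ 2)))%C)
      by (rewrite <- diag_coef_by_parts; ring).
    assert (HnC : RtoC (INR n + 1) <> 0%C) by (intros E0; injection E0; lra).
    rewrite Hpart, RtoC_inv by exact Hn. rewrite RtoC_pow in *.
    field. split; [exact HnC | exact al_neq_0]. }
  rewrite hyp_term_diag, Cmult_assoc, Hsplit, re_scal_r, !Re_minus, re_scal_r.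
  unfold abel_coef, abel_error. rewrite S_INR. field. lra.
Qed.

Lemma Rabs_abel_coef_le w n : Cmod w = 1 ->
  Rabs (abel_coef w n) <= E * (1 + Cmod be) / Cmod al.
Proof.
  intros Hw. pose proof (pos_INR n). pose proof (Cmod_ge_0 be).
  pose proof (proj1 (Cmod_gt_0 _) al_neq_0). pose proof (exp_pos (1 + 4 * M ^ 2)).
  unfold abel_coef. eapply Rle_trans; [apply re_le_Cmod|].
  rewrite !Cmod_mult, Cmod_div, Hw by exact al_neq_0.
  unfold Rdiv. rewrite Rmult_1_l, (Rmult_comm (/ Cmod al)).
  apply Rmult_le_compat_r; [apply Rlt_le, Rinv_0_lt_compat; lra|].
  assert (Hsum : Cmod (RtoC (INR n) + be) <= INR n + Cmod be).
  { eapply Rle_trans; [apply Cmod_triangle|]. rewrite Cmod_R, Rabs_right; lra. }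
  apply Rle_trans with (E / (INR n + 1) * (INR n + Cmod be)).
  - apply Rmult_le_compat; try apply Cmod_ge_0; [apply Cmod_diag_coef_le | exact Hsum].
  - apply Rmult_le_reg_r with (INR n + 1); [lra|].
    unfold Rdiv. field_simplify; [|lra].
    assert (0 <= E * INR n * Cmod be) by (apply Rmult_le_pos; [apply Rmult_le_pos|]; unfold E; lra).
    unfold E in *. lra.
Qed.

Lemma Rabs_abel_error_le w n : Cmod w = 1 ->
  Rabs (abel_error w n) <= E * Cmod de / Cmod al / (INR n + 1) ^ 2.
Proof.
  intros Hw. pose proof (pos_INR n).
  pose proof (proj1 (Cmod_gt_0 _) al_neq_0). pose proof (exp_pos (1 + 4 * M ^ 2)).
  assert (Hpos : 0 < (INR n + 1) ^ 2) by (apply pow_lt; lra).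
  unfold abel_error. rewrite Rabs_div, (Rabs_right ((INR n + 1) ^ 2)) by lra.
  apply Rmult_le_compat_r; [apply Rlt_le, Rinv_0_lt_compat; lra|].
  eapply Rle_trans; [apply re_le_Cmod|].
  rewrite Cmod_mult, Cmod_div, Cmod_mult, Hw, Rmult_1_l by exact al_neq_0.
  apply Rle_trans with (Cmod de / Cmod al * (E / (INR n + 1))).
  - apply Rmult_le_compat_l; [apply Rdiv_le_0_compat; [apply Cmod_ge_0 | lra]|].
    apply Cmod_diag_coef_le.
  - replace (E * Cmod de / Cmod al) with (Cmod de / Cmod al * E) by (field; lra).
    apply Rmult_le_compat_l; [apply Rdiv_le_0_compat; [apply Cmod_ge_0 | lra]|].
    unfold Rdiv. rewrite <- (Rmult_1_r E) at 2. apply Rmult_le_compat_l; [unfold E; lra|].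
    rewrite <- Rinv_1. apply Rinv_le_contravar; lra.
Qed.

Lemma hyp2F1_bounded : exists K, forall x, 0 <= x < 1 ->
  Cmod (hyp2F1 a a (RtoC 1) (RtoC x)) <= K.
Proof.
  set (P := E * (1 + Cmod be) / Cmod al). set (Q := E * Cmod de / Cmod al).
  pose proof (proj1 (Cmod_gt_0 _) al_neq_0). pose proof (Cmod_ge_0 be). pose proof (Cmod_ge_0 de).
  pose proof (exp_pos (1 + 4 * M ^ 2)).
  assert (HP : 0 <= P) by (unfold P, E; apply Rdiv_le_0_compat; nra).
  assert (HQ : 0 <= Q) by (unfold Q, E; apply Rdiv_le_0_compat; nra).
  exists (2 * P + 4 * Q). intros x Hx.
  apply Cmod_Series_le; [lra | now apply ex_series_Cmod_hyp_term|].
  intros w Hw. rewrite (Series_ext _ _ (Re_hyp_term_by_parts w x)).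
  destruct (Series_diff_pow_le (abel_coef w) P x Hx (fun n => Rabs_abel_coef_le w n Hw))
    as [Hex1 Hle1].
  destruct (Series_inv_sq_pow (abel_error w) Q x Hx (fun n => Rabs_abel_error_le w n Hw))
    as [Hex2 Hle2].
  rewrite Series_minus; [| exact Hex1 | now apply ex_series_Rabs].
  pose proof (Rabs_maj2 (Series (fun n => abel_error w n * x ^ n))). lra.
Qed.

End OscillatingCase.
End DiagonalHypergeometric.

Lemma hyp2F1_diag_bound M : exists K, 0 <= K /\ forall x, 0 <= x < 1 ->
  Cmod (hyp2F1 (1/2, M) (1/2, M) (RtoC 1) (RtoC x))
  <= K * (1 + ln (/ (1 - x))) ^ (1 - if Rlt_dec 0 M then 1 else 0).
Proof.
  destruct (Rlt_dec 0 M) as [HM | HM]; simpl.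
  - destruct (hyp2F1_bounded M HM) as [K HK]. exists K. split.
    + eapply Rle_trans; [apply Cmod_ge_0 | apply (HK 0); lra].
    + intros x Hx. rewrite Rmult_1_r. now apply HK.
  - pose proof (exp_pos (1 + 4 * M ^ 2)).
    exists (2 * exp (1 + 4 * M ^ 2)). split; [lra|].
    intros x Hx. rewrite Rmult_1_r.
    pose proof (ln_ge_0 _ (inv_1_minus_ge_1 x Hx)).
    eapply Rle_trans; [apply Cmod_hyp2F1_log_le, Hx | nra].
Qed.

(** * The kernel *)

Lemma phi_neg l t : 1 < l -> 0 < t -> phi l t < 0.
Proof.
  intros hl ht. unfold phi, Rdiv. pose proof (exp_pos ((1 - l) * ln t)).
  assert (/ (1 - l) < 0) by (apply Rinv_lt_0_compat; lra). unfold Rpower. nra.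
Qed.

Lemma phi_le l t b : 1 < l -> 0 < b -> b <= t -> phi l b <= phi l t.
Proof.
  intros hl hb hbt. unfold phi, Rdiv, Rpower.
  assert (ln b <= ln t) by (apply ln_le; lra).
  assert (exp ((1 - l) * ln t) <= exp ((1 - l) * ln b)) by (apply exp_le; nra).
  assert (/ (1 - l) < 0) by (apply Rinv_lt_0_compat; lra). nra.
Qed.

Lemma phi_ratio_ge_1 l t b : 1 < l -> 0 < b -> b <= t -> 1 <= phi l b / phi l t.
Proof.
  intros hl hb hbt. pose proof (phi_neg l t hl ltac:(lra)). pose proof (phi_le l t b hl hb hbt).
  apply Rmult_le_reg_r with (- phi l t); [lra|].
  replace (phi l b / phi l t * - phi l t) with (- phi l b) by (field; lra). lra.
Qed.

Lemma Cmod_phi_cpow_le l M b : 1 < l -> 0 < b -> 0 <= M ->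
  Cmod (cpow_real (phi l b) (Cplus (RtoC (l / (1 - l))) (Cmult (RtoC 2) (1/2, M))))
  <= Rpower (Rabs (phi l b)) (1 / (1 - l)).
Proof.
  intros hl hb HM. pose proof (phi_neg l b hl hb).
  rewrite Rabs_left by assumption.
  replace (1 / (1 - l)) with (Re (Cplus (RtoC (l / (1 - l))) (Cmult (RtoC 2) (1/2, M))))
    by (unfold RtoC, Cplus, Cmult, Re; simpl; field; lra).
  apply Cmod_cpow_real_neg_le; [assumption|].
  unfold RtoC, Cplus, Cmult, Im; simpl. lra.
Qed.

Lemma Cmod_cpow_neg_half_le S r M : 0 < r < S ->
  Cmod (cpow_real (S ^ 2 - r ^ 2) (Copp (1/2, M))) <= / (sqrt S * sqrt (S - r)).
Proof.
  intros Hr. rewrite Cmod_cpow_real_pos by nra.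
  replace (Re (Copp (1/2, M))) with (- / 2) by (unfold Copp, Re; simpl; field).
  rewrite Rpower_Ropp, Rpower_sqrt by nra.
  apply Rinv_le_contravar; [apply Rmult_lt_0_compat; apply sqrt_lt_R0; lra|].
  rewrite <- sqrt_mult_alt by lra. apply sqrt_le_1_alt. nra.
Qed.

Lemma hyp_arg_bounds p q r : q <= p < 0 -> 0 < r < p - q ->
  0 <= ((p - q) ^ 2 - r ^ 2) / ((p + q) ^ 2 - r ^ 2) < 1 /\
  / (1 - ((p - q) ^ 2 - r ^ 2) / ((p + q) ^ 2 - r ^ 2)) <= q / p.
Proof.
  intros Hpq Hr.
  assert (HD : 0 < (p + q) ^ 2 - r ^ 2) by nra.
  split; [split|].
  - apply Rdiv_le_0_compat; nra.
  - apply Rmult_lt_reg_r with ((p + q) ^ 2 - r ^ 2); [exact HD|].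
    unfold Rdiv. rewrite Rmult_assoc, Rinv_l; nra.
  - replace (/ (1 - ((p - q) ^ 2 - r ^ 2) / ((p + q) ^ 2 - r ^ 2)))
      with (((p + q) ^ 2 - r ^ 2) / (4 * p * q)) by (field; nra).
    apply Rle_trans with (4 * q ^ 2 / (4 * p * q)); [|right; field; lra].
    unfold Rdiv. apply Rmult_le_compat_r; [apply Rlt_le, Rinv_0_lt_compat; nra | nra].
Qed.

Lemma RInt_inv_sqrt_le S A C : 0 <= A < S -> 0 <= C ->
  ex_RInt (fun r => C / (sqrt S * sqrt (S - r))) 0 A /\
  RInt (fun r => C / (sqrt S * sqrt (S - r))) 0 A <= 2 * C.
Proof.
  intros HA HC.
  set (F := fun r => -2 * C * sqrt (S - r) / sqrt S).
  assert (HS : 0 < sqrt S) by (apply sqrt_lt_R0; lra).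
  assert (HF : forall r, 0 <= r <= A -> is_derive F r (C / (sqrt S * sqrt (S - r)))).
  { intros r Hr. assert (0 < sqrt (S - r)) by (apply sqrt_lt_R0; lra).
    unfold F. auto_derive; [lra|]. replace (S + - r) with (S - r) by ring. field. lra. }
  assert (HI : is_RInt (fun r => C / (sqrt S * sqrt (S - r))) 0 A (F A - F 0)).
  { apply (is_RInt_derive F).
    - intros r Hr. rewrite Rmin_left, Rmax_right in Hr by lra. now apply HF.
    - intros r Hr. rewrite Rmin_left, Rmax_right in Hr by lra.
      assert (0 < sqrt (S - r)) by (apply sqrt_lt_R0; lra).
      apply (ex_derive_continuous (K := R_AbsRing) (V := R_NormedModule)).
      auto_derive. replace (S + - r) with (S - r) by ring.
      repeat split; try lra. apply Rgt_not_eq, Rmult_lt_0_compat; lra. }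
  split; [eexists; exact HI|].
  rewrite (is_RInt_unique _ _ _ _ HI). unfold F. rewrite Rminus_0_r.
  assert (0 <= sqrt (S - A) / sqrt S) by (apply Rdiv_le_0_compat; [apply sqrt_pos | lra]).
  replace (-2 * C * sqrt (S - A) / sqrt S - -2 * C * sqrt S / sqrt S)
    with (2 * C - 2 * C * (sqrt (S - A) / sqrt S)) by (field; lra).
  nra.
Qed.

Lemma RInt_not_ex_RInt (f : R -> R) a b : ~ ex_RInt f a b -> RInt f a b = 0.
Proof.
  intros H. unfold RInt, iota, lim; simpl. unfold R_complete_lim.
  rewrite (Lub_Rbar_eqset _ (fun _ => True)).
  - replace (Lub_Rbar (fun _ : R => True)) with p_infty; [reflexivity|].
    symmetry. apply is_lub_Rbar_unique. split; [intros x _; exact I|].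
    intros [x| |] Hx; simpl; auto.
    + specialize (Hx (x + 1) I). simpl in Hx. lra.
    + exact (Hx 0 I).
  - intros x; split; [auto|]. intros _ y Hy. exfalso. apply H. now exists y.
Qed.

Lemma Cmod_Ekernel_le l mc : 1 < l -> exists K, 0 <= K /\
  forall t b r, 1 <= b -> b <= t -> 0 < r < phi l t - phi l b ->
  Cmod (Ekernel l mc r t b)
  <= K * Rpower (Rabs (phi l b)) (1 / (1 - l)) * (1 + ln (phi l b / phi l t)) ^ (1 - sgnM l mc)
     / (sqrt (- (phi l t + phi l b)) * sqrt (- (phi l t + phi l b) - r)).
Proof.
  intros hl.
  assert (HM : 0 <= Mpar l mc) by (unfold Mpar; apply Rdiv_le_0_compat; [apply sqrt_pos | lra]).
  destruct (hyp2F1_diag_bound (Mpar l mc)) as [KF [HKF HF]].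
  set (K2 := Cmod (cpow_real 2 (Cmult (RtoC 2) (apar l mc)))).
  set (Kl := Cmod (cpow_real (1 - l) (RtoC (l / (1 - l))))).
  assert (HK2 : 0 <= K2) by apply Cmod_ge_0. assert (HKl : 0 <= Kl) by apply Cmod_ge_0.
  exists (K2 * Kl * KF). split; [now repeat apply Rmult_le_pos|].
  intros t b r Hb Hbt Hr.
  pose proof (phi_neg l t hl ltac:(lra)) as Hpt. pose proof (phi_le l t b hl ltac:(lra) Hbt).
  set (pt := phi l t) in *. set (pb := phi l b) in *. set (S := - (pt + pb)).
  destruct (hyp_arg_bounds pt pb r ltac:(lra) Hr) as [Hz Hzq].
  set (z := ((pt - pb) ^ 2 - r ^ 2) / ((pt + pb) ^ 2 - r ^ 2)) in *.
  pose proof (Cmod_phi_cpow_le l (Mpar l mc) b hl ltac:(lra) HM) as Hpow.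
  pose proof (Cmod_cpow_neg_half_le S r (Mpar l mc) ltac:(unfold S; lra)) as Hden.
  replace (S ^ 2) with ((pt + pb) ^ 2) in Hden by (unfold S; ring).
  assert (Hhyp : Cmod (hyp2F1 (apar l mc) (apar l mc) (RtoC 1) (RtoC z))
                 <= KF * (1 + ln (pb / pt)) ^ (1 - sgnM l mc)).
  { eapply Rle_trans; [apply HF, Hz|]. apply Rmult_le_compat_l; [exact HKF|].
    pose proof (inv_1_minus_ge_1 z Hz) as Hinv.
    apply pow_incr. split.
    - pose proof (ln_ge_0 _ Hinv). lra.
    - apply Rplus_le_compat_l, ln_le; lra. }
  unfold Ekernel. cbv zeta. fold pt pb z K2 Kl. rewrite !Cmod_mult.
  set (rho := Rpower (Rabs pb) (1 / (1 - l))) in *.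
  set (Lk := (1 + ln (pb / pt)) ^ (1 - sgnM l mc)) in *.
  replace (K2 * Kl * KF * rho * Lk / (sqrt S * sqrt (S - r)))
    with (K2 * Kl * rho * / (sqrt S * sqrt (S - r)) * (KF * Lk)) by (unfold Rdiv; ring).
  repeat apply Rmult_le_compat; try apply Cmod_ge_0;
    try (repeat apply Rmult_le_pos; apply Cmod_ge_0); try apply Rle_refl; assumption.
Qed.

Theorem lemma3p3 (l mc : R) (hl : 1 < l) (hm : (3 * l - 1) ^ 2 <= 4 * mc ^ 2) :
  exists Cst : R, forall t b : R, 1 <= t -> 1 <= b -> b <= t ->
    RInt (fun r => Cmod (Ekernel l mc r t b)) 0 (phi l t - phi l b)
    <= Cst * Rpower (Rabs (phi l b)) (1 / (1 - l))
           * (1 + ln (phi l b / phi l t)) ^ (1 - sgnM l mc).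
Proof.
  destruct (Cmod_Ekernel_le l mc hl) as [K [HK Hker]].
  exists (2 * K). intros t b Ht Hb Hbt.
  pose proof (phi_neg l t hl ltac:(lra)). pose proof (phi_neg l b hl ltac:(lra)).
  pose proof (phi_le l t b hl ltac:(lra) Hbt).
  set (C := K * Rpower (Rabs (phi l b)) (1 / (1 - l))
            * (1 + ln (phi l b / phi l t)) ^ (1 - sgnM l mc)).
  assert (HC : 0 <= C).
  { unfold C. apply Rmult_le_pos; [apply Rmult_le_pos; [exact HK | apply Rlt_le, exp_pos]|].
    apply pow_le. pose proof (ln_ge_0 _ (phi_ratio_ge_1 l t b hl ltac:(lra) Hbt)). lra. }
  replace (2 * K * _ * _) with (2 * C) by (unfold C; ring).
  destruct (RInt_inv_sqrt_le (- (phi l t + phi l b)) (phi l t - phi l b) C ltac:(lra) HC)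
    as [Hex Hle].
  destruct (classic (ex_RInt (fun r => Cmod (Ekernel l mc r t b)) 0 (phi l t - phi l b)))
    as [Hint | Hint].
  - eapply Rle_trans; [|exact Hle].
    apply RInt_le; [lra | exact Hint | exact Hex |]. intros r Hr. now apply Hker.
  - (* A non-integrable function has [RInt] equal to 0. *)
    rewrite RInt_not_ex_RInt by exact Hint. lra.
Qed.
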